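(* For $j\in\{1,\dots,k\}$ let $F_j\colon\mathbb B^{\alpha^j}\to\mathbb C$ ($j\le k+1$) be functors and $\phi_j\colon F_j\to F_{j+1}$ transformations of type $|\alpha^j|\xrightarrow{\sigma_j}n_j\xleftarrow{\tau_j}|\alpha^{j+1}|$. Suppose the type $|\alpha^1|\to l\leftarrow|\alpha^{k+1}|$ of $\phi_k\circ\cdots\circ\phi_1$ is computed by iterated pushouts in finite sets, and let $\xi_j\colon n_j\to l$ be the induced map from $n_j$ to $l$. Let $i\in l$. If the $i$-th connected component of the composite graph $\Gamma(\phi_k)\circ\cdots\circ\Gamma(\phi_1)$ is acyclic and, for all $j\in\{1,\dots,k\}$ and all $x\in\xi_j^{-1}\{i\}$, the transformation $\phi_j$ is dinatural in its $x$-th variable, then $\phi_k\circ\cdots\circ\phi_1$ is dinatural in its $i$-th variable.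
   Context: Notation: for $k\in\mathbb N$, $k$ also denotes $\{1,\dots,k\}$. For $\alpha\in\{+,-\}^*$, $\mathbb B^\alpha=\mathbb B^{\alpha_1}\times\cdots\times\mathbb B^{\alpha_{|\alpha|}}$ with $\mathbb B^+=\mathbb B$, $\mathbb B^-=\mathbb B^{op}$. For $\mathbf A=(A_1,\dots,A_n)$ and $\sigma\colon k\to n$, $\mathbf A\sigma=(A_{\sigma1},\dots,A_{\sigma k})$. A morphism $f\colon A\to B$ placed in a contravariant argument is regarded as a morphism $B\to A$ of $\mathbb B^{op}$. A transformation $\phi\colon F\to G$ of type $|\alpha|\xrightarrow{\sigma}n\xleftarrow{\tau}|\beta|$ ($\sigma,\tau$ arbitrary functions) is a family $\phi_{\mathbf A}\colon F(\mathbf A\sigma)\to G(\mathbf A\tau)$, $\mathbf A\in\mathrm{Ob}(\mathbb B)^n$; $A_i$ is its $i$-th variable. $\mathbf A[X,Y/i]\sigma$ is the tuple whose $j$-th entry is $X$ if $\sigma j=i,\alpha_j=-$, $Y$ if $\sigma j=i,\alpha_j=+$, and $A_{\sigma j}$ (or $1_{A_{\sigma j}}$ when $X,Y$ are morphisms) otherwise; $\mathbf A[X/i]=\mathbf A[X,X/i]$. $\phi$ is dinatural in its $i$-th variable if for all objects $A_j$ ($j\neq i$) and all $f\colon A\to B$: $G(\mathbf A[A,f/i]\tau)\circ\phi_{\mathbf A[A/i]}\circ F(\mathbf A[f,A/i]\sigma)=G(\mathbf A[f,B/i]\tau)\circ\phi_{\mathbf A[B/i]}\circ F(\mathbf A[B,f/i]\sigma)$.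 Vertical composition of $\phi$ with $\psi\colon G\to H$ of type $|\beta|\xrightarrow{\eta}m\xleftarrow{\theta}|\gamma|$: with $\zeta\colon n\to l$, $\xi\colon m\to l$ a pushout of $\tau,\eta$, $\psi\circ\phi$ has type $(\zeta\sigma,\xi\theta)$ and components $\psi_{\mathbf A\xi}\circ\phi_{\mathbf A\zeta}$. Iterating gives $\phi_k\circ\cdots\circ\phi_1$, whose type is given by pasting pushouts; $\xi_j$ is the composite of the pushout maps from $n_j$ to the final set $l$. Composite graph $\Gamma(\phi_k)\circ\cdots\circ\Gamma(\phi_1)$: directed bipartite graph whose places are the disjoint union of $|\alpha^1|,\dots,|\alpha^{k+1}|$ and whose transitions are $n_1\sqcup\cdots\sqcup n_k$; for $t\in n_j$: arc from place $p$ of block $\alpha^j$ to $t$ iff $\sigma_j p=t$ and $\alpha^j_p=+$, from $t$ to it iff $\sigma_j p=t$ and $\alpha^j_p=-$; arc from place $p$ of block $\alpha^{j+1}$ to $t$ iff $\tau_j p=t$ and $\alpha^{j+1}_p=-$, from $t$ to it iff $\tau_jp=t$ and $\alpha^{j+1}_p=+$. Its connected components correspond bijectively to $l$; the $i$-th one contains the transitions $t\in n_j$ with $\xi_j t=i$. Acyclic means without directed cycles. *)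

From HB Require Import structures.
From Stdlib Require Import Relations.
From mathcomp Require Import all_boot.

Set Implicit Arguments.
Unset Strict Implicit.
Unset Printing Implicit Defensive.

Record category := Category {
  cOb : Type;
  cMor : Type;
  cdom : cMor -> cOb;
  ccod : cMor -> cOb;
  cid : cOb -> cMor;
  ccomp : cMor -> cMor -> cMor;
  cdom_id : forall X, cdom (cid X) = X;
  ccod_id : forall X, ccod (cid X) = X;
  cdom_comp : forall g f, ccod f = cdom g -> cdom (ccomp g f) = cdom f;
  ccod_comp : forall g f, ccod f = cdom g -> ccod (ccomp g f) = ccod g;
  ccomp_idl : forall f, ccomp (cid (ccod f)) f = f;
  ccomp_idr : forall f, ccomp f (cid (cdom f)) = f;
  ccompA : forall h g f, ccod f = cdom g -> ccod g = cdom h ->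
             ccomp h (ccomp g f) = ccomp (ccomp h g) f
}.

(* A functor F : B^alpha -> C, alpha : 'I_m -> bool (true = '+',       *)
(* false = '-').  An object of B^alpha is a tuple A : 'I_m -> Ob B; a  *)
(* morphism is a tuple f : 'I_m -> Mor B, where a contravariant entry  *)
(* f p : X -> Y of B is a morphism Y -> X of B^op.                      *)
Record mfunctor (B C : category) (m : nat) (alpha : 'I_m -> bool) := MFunctor {
  fob : ('I_m -> cOb B) -> cOb C;
  fmor : ('I_m -> cMor B) -> cMor C;
  fmor_dom : forall f : 'I_m -> cMor B,
    cdom (fmor f) = fob (fun p => if alpha p then cdom (f p) else ccod (f p));
  fmor_cod : forall f : 'I_m -> cMor B,
    ccod (fmor f) = fob (fun p => if alpha p then ccod (f p) else cdom (f p));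
  fmor_id : forall A : 'I_m -> cOb B, fmor (fun p => cid (A p)) = cid (fob A);
  fmor_comp : forall g f : 'I_m -> cMor B,
    (forall p, if alpha p then ccod (f p) = cdom (g p)
               else ccod (g p) = cdom (f p)) ->
    fmor (fun p => if alpha p then ccomp (g p) (f p) else ccomp (f p) (g p))
    = ccomp (fmor g) (fmor f)
}.

Record mtrans (B C : category) (m1 m2 n : nat) (alpha1 : 'I_m1 -> bool)
    (alpha2 : 'I_m2 -> bool) (F : mfunctor B C alpha1) (G : mfunctor B C alpha2)
    (sigma : 'I_m1 -> 'I_n) (tau : 'I_m2 -> 'I_n) := MTrans {
  tcomp : ('I_n -> cOb B) -> cMor C;
  tcomp_dom : forall A, cdom (tcomp A) = fob F (fun p => A (sigma p));
  tcomp_cod : forall A, ccod (tcomp A) = fob G (fun q => A (tau q))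
}.

Definition dinatural_in (B C : category) (m1 m2 n : nat) (alpha1 : 'I_m1 -> bool)
    (alpha2 : 'I_m2 -> bool) (F : mfunctor B C alpha1) (G : mfunctor B C alpha2)
    (sigma : 'I_m1 -> 'I_n) (tau : 'I_m2 -> 'I_n)
    (phi : ('I_n -> cOb B) -> cMor C) (i : 'I_n) : Prop :=
  forall (A : 'I_n -> cOb B) (f : cMor B),
    let X := cdom f in
    let Y := ccod f in
    ccomp (fmor G (fun q => if tau q == i then (if alpha2 q then f else cid X)
                            else cid (A (tau q))))
      (ccomp (phi (fun j => if j == i then X else A j))
             (fmor F (fun p => if sigma p == i then (if alpha1 p then cid X else f)
                               else cid (A (sigma p)))))
    =
    ccomp (fmor G (fun q => if tau q == i then (if alpha2 q then cid Y else f)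
                            else cid (A (tau q))))
      (ccomp (phi (fun j => if j == i then Y else A j))
             (fmor F (fun p => if sigma p == i then (if alpha1 p then f else cid Y)
                               else cid (A (sigma p))))).

(* Chains of k+1 transformations phi_0, ..., phi_k (indexed by nat;    *)
(* only indices j <= k matter): phi_j : F_j -> F_{j+1} of type         *)
(* 'I_(a j) --sigma j--> 'I_(n j) <--tau j-- 'I_(a j.+1).               *)

(* (l, xi_0..xi_k) is a colimit in finite sets of the zigzag
   n_0 <-tau_0- a_1 -sigma_1-> n_1 <- ... -> n_k, i.e. exactly the set
   computed by the iterated pushouts (pushout pasting). *)
Definition is_colimit (k : nat) (a n : nat -> nat)
    (sigma : forall j, 'I_(a j) -> 'I_(n j))
    (tau : forall j, 'I_(a j.+1) -> 'I_(n j))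
    (l : nat) (xi : forall j, 'I_(n j) -> 'I_l) : Prop :=
  [/\ (forall j, j < k -> forall p : 'I_(a j.+1), xi j (tau j p) = xi j.+1 (sigma j.+1 p)),
      (forall (e : nat) (h : forall j, 'I_(n j) -> 'I_e),
         (forall j, j < k -> forall p : 'I_(a j.+1), h j (tau j p) = h j.+1 (sigma j.+1 p)) ->
         exists u : 'I_l -> 'I_e, forall j, j <= k -> forall x, u (xi j x) = h j x) &
      (forall (e : nat) (u v : 'I_l -> 'I_e),
         (forall j, j <= k -> forall x, u (xi j x) = v (xi j x)) -> u =1 v)].

Definition composite (B C : category) (k : nat) (n : nat -> nat) (l : nat)
    (phi : forall j, ('I_(n j) -> cOb B) -> cMor C)
    (xi : forall j, 'I_(n j) -> 'I_l) (A : 'I_l -> cOb B) : cMor C :=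
  foldl (fun acc j => ccomp (phi j (fun x => A (xi j x))) acc)
        (phi 0 (fun x => A (xi 0 x))) (iota 1 k).

Inductive gnode (a n : nat -> nat) : Type :=
| Place (j : nat) (p : 'I_(a j))
| Trans (j : nat) (t : 'I_(n j)).

Inductive garc (k : nat) (a n : nat -> nat) (alpha : forall j, 'I_(a j) -> bool)
    (sigma : forall j, 'I_(a j) -> 'I_(n j))
    (tau : forall j, 'I_(a j.+1) -> 'I_(n j)) : gnode a n -> gnode a n -> Prop :=
| arc_sigma_in j (p : 'I_(a j)) : j <= k -> alpha j p ->
    garc k alpha sigma tau (@Place a n j p) (@Trans a n j (sigma j p))
| arc_sigma_out j (p : 'I_(a j)) : j <= k -> ~~ alpha j p ->
    garc k alpha sigma tau (@Trans a n j (sigma j p)) (@Place a n j p)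
| arc_tau_in j (p : 'I_(a j.+1)) : j <= k -> ~~ alpha j.+1 p ->
    garc k alpha sigma tau (@Place a n j.+1 p) (@Trans a n j (tau j p))
| arc_tau_out j (p : 'I_(a j.+1)) : j <= k -> alpha j.+1 p ->
    garc k alpha sigma tau (@Trans a n j (tau j p)) (@Place a n j.+1 p).

Definition in_component (k : nat) (a n : nat -> nat)
    (alpha : forall j, 'I_(a j) -> bool)
    (sigma : forall j, 'I_(a j) -> 'I_(n j))
    (tau : forall j, 'I_(a j.+1) -> 'I_(n j))
    (l : nat) (xi : forall j, 'I_(n j) -> 'I_l) (i : 'I_l) (u : gnode a n) : Prop :=
  exists j (t : 'I_(n j)), [/\ j <= k, xi j t = i &
    clos_refl_trans (gnode a n)
      (fun x y => garc k alpha sigma tau x y \/ garc k alpha sigma tau y x)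
      u (@Trans a n j t)].

Definition component_acyclic (k : nat) (a n : nat -> nat)
    (alpha : forall j, 'I_(a j) -> bool)
    (sigma : forall j, 'I_(a j) -> 'I_(n j))
    (tau : forall j, 'I_(a j.+1) -> 'I_(n j))
    (l : nat) (xi : forall j, 'I_(n j) -> 'I_l) (i : 'I_l) : Prop :=
  forall u, in_component k alpha sigma tau xi i u ->
    ~ clos_trans (gnode a n) (garc k alpha sigma tau) u u.

From HB Require Import structures.
From Stdlib Require Import Relations FunctionalExtensionality.
From mathcomp Require Import all_boot.

(* Fix objects A, a morphism f : X -> Y and the variable i.  A marking assigns
   a bit to every transition (variable of some phi_j): in the i-th component,
   unmarked transitions are evaluated at X and marked ones at Y.  A marking c
   determines the zigzag  E_{k+1} o P_k o E_k o ... o P_0 o E_0  ([upto c]),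
   where P_j is phi_j at the objects prescribed by c and E_j applies F_j to f
   at the places whose two adjacent marks differ, and identities elsewhere.
   With no transition marked the zigzag is the left side of the dinaturality
   hexagon of the composite, with all of them marked it is the right side.

   The proof fires the transitions of the i-th component one at a time.  Firing
   an unmarked transition x of phi_j all of whose successors in the graph are
   already marked rewrites the segment E_{j+1} o P_j o E_j by the hexagon of
   phi_j in x, so the zigzag does not change (section Firing).  Acyclicity
   provides such an x as long as an unmarked transition is left (section
   Scheduling), and the two extreme markings give the two sides of the
   hexagon of the composite (lemma [upto_marked]). *)

Lemma clos_t_rt {T : Type} {R : relation T} {x y z : T} :
  clos_trans T R x y -> clos_refl_trans T R y z -> clos_trans T R x z.
Proof.
move=> xy yz; elim: yz x xy => [y' z' y'z' | // | y' z' w' _ IH1 _ IH2] x' x'y'.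
- exact: t_trans x'y' (t_step _ _ _ _ y'z').
- exact: IH2 (IH1 _ x'y').
Qed.

Section CategoryFacts.
Variable C : category.

Lemma comp_id_cod (g : cMor C) (Z : cOb C) : ccod g = Z -> ccomp (cid Z) g = g.
Proof. by move<-; rewrite ccomp_idl. Qed.

Lemma comp_id_dom (g : cMor C) (Z : cOb C) : cdom g = Z -> ccomp g (cid Z) = g.
Proof. by move<-; rewrite ccomp_idr. Qed.

Lemma cid_idem (Z : cOb C) : ccomp (cid Z) (cid Z) = cid Z.
Proof. by apply: comp_id_cod; rewrite ccod_id. Qed.

(* Reassociating the string h, r, q, p, g, o so that the block g o p o q
   becomes a single factor; used to isolate a dinaturality hexagon. *)
Lemma comp_regroup (o g p q r h : cMor C) :
  ccod h = cdom r -> ccod r = cdom q -> ccod q = cdom p ->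
  ccod p = cdom g -> ccod g = cdom o ->
  ccomp (ccomp o g) (ccomp p (ccomp (ccomp q r) h)) =
  ccomp o (ccomp (ccomp g (ccomp p q)) (ccomp r h)).
Proof.
move=> hr rq qp pg go.
have rh_q : ccod (ccomp r h) = cdom q by rewrite ccod_comp.
have pq_g : ccod (ccomp p q) = cdom g by rewrite ccod_comp.
have rh_pq : ccod (ccomp r h) = cdom (ccomp p q) by rewrite cdom_comp.
have pqrh_g : ccod (ccomp (ccomp p q) (ccomp r h)) = cdom g by rewrite ccod_comp.
by rewrite -(ccompA hr rq) (ccompA rh_q qp) -(ccompA pqrh_g go) (ccompA rh_pq pq_g).
Qed.

End CategoryFacts.

Lemma fmor_comp_ends (B C : category) m (al : 'I_m -> bool) (G : mfunctor B C al)
    (g h : 'I_m -> cMor B) :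
  (forall p, if al p then ccod (h p) = cdom (g p) else ccod (g p) = cdom (h p)) ->
  ccod (fmor G h) = cdom (fmor G g).
Proof.
move=> gh; rewrite fmor_cod fmor_dom; congr (fob _ _).
by apply: functional_extensionality => p; move: (gh p); case: (al p).
Qed.

Section Composite.
Variables (B C : category) (n : nat -> nat) (l : nat)
  (ph : forall j, ('I_(n j) -> cOb B) -> cMor C)
  (xi : forall j, 'I_(n j) -> 'I_l) (A : 'I_l -> cOb B).
Local Notation ph_at j := (ph j (fun x => A (xi j x))).

Lemma composite_succ m :
  composite m.+1 ph xi A = ccomp (ph_at m.+1) (composite m ph xi A).
Proof.
rewrite /composite (_ : iota 1 m.+1 = iota 1 m ++ [:: m.+1]) ?foldl_cat //.
by rewrite -[in iota 1 m.+1](addn1 m) iotaD add1n.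
Qed.

Lemma composite_ends m :
  (forall j, j < m -> ccod (ph_at j) = cdom (ph_at j.+1)) ->
  cdom (composite m ph xi A) = cdom (ph_at 0) /\
  ccod (composite m ph xi A) = ccod (ph_at m).
Proof.
elim: m => [|m IH] chain //; rewrite composite_succ.
have [dom_m cod_m] := IH (fun j lt_jm => chain j (ltnW lt_jm)).
have link : ccod (composite m ph xi A) = cdom (ph_at m.+1) by rewrite cod_m chain.
by rewrite cdom_comp // ccod_comp.
Qed.

End Composite.

(* The two legs of a dinaturality hexagon at a place of variance al, on the
   left side (b = false) and on the right side (b = true): [hex_in] for an
   argument of the source functor, [hex_out] for one of the target functor. *)
Definition hex_in {B : category} (f : cMor B) (b al : bool) : cMor B :=
  if b then (if al then f else cid (ccod f)) else (if al then cid (cdom f) else f).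

Definition hex_out {B : category} (f : cMor B) (b al : bool) : cMor B :=
  if b then (if al then cid (ccod f) else f) else (if al then f else cid (cdom f)).

Section Zigzag.
Variables (B C : category) (k : nat) (a n : nat -> nat)
  (alpha : forall j, 'I_(a j) -> bool)
  (F : forall j, mfunctor B C (alpha j))
  (sigma : forall j, 'I_(a j) -> 'I_(n j))
  (tau : forall j, 'I_(a j.+1) -> 'I_(n j))
  (phi : forall j, mtrans (F j) (F j.+1) (sigma j) (tau j))
  (l : nat) (xi : forall j, 'I_(n j) -> 'I_l) (i : 'I_l).
Hypothesis cocone : forall j, j < k -> forall p : 'I_(a j.+1),
  xi j (tau j p) = xi j.+1 (sigma j.+1 p).
Variables (A : 'I_l -> cOb B) (f : cMor B).
Local Notation X := (cdom f).
Local Notation Y := (ccod f).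

Definition marking := forall j, 'I_(n j) -> bool.

Definition end_ob (b : bool) := if b then Y else X.
Definition ob_at (v : 'I_l) (b : bool) := if v == i then end_ob b else A v.
Definition trans_ob (c : marking) j (t : 'I_(n j)) := ob_at (xi j t) (c j t).

(* Places of block j: the variable of the composite they belong to, and the
   marks of the transitions on their left (of phi_{j-1}) and on their right
   (of phi_j).  At the outer boundary, where there is no transition, the mark
   is taken to be ~~ alpha on the left and alpha on the right. *)
Definition var j : 'I_(a j) -> 'I_l :=
  match j return 'I_(a j) -> 'I_l with
  | 0 => fun p => xi 0 (sigma 0 p)
  | j'.+1 => fun p => xi j' (tau j' p)
  end.

Definition left_mark (c : marking) j : 'I_(a j) -> bool :=
  match j return 'I_(a j) -> bool with
  | 0 => fun p => ~~ alpha 0 p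
  | j'.+1 => fun p => c j' (tau j' p)
  end.

Definition right_mark (c : marking) j (p : 'I_(a j)) : bool :=
  if j <= k then c j (sigma j p) else alpha j p.

Definition place_mor (c : marking) j (p : 'I_(a j)) : cMor B :=
  if var j p == i then
    (if left_mark c j p == right_mark c j p then cid (end_ob (right_mark c j p)) else f)
  else cid (A (var j p)).

Definition fstep (c : marking) j := fmor (F j) (place_mor c j).
Definition tstep (c : marking) j := tcomp (phi j) (trans_ob c j).

(* Where f appears it points from the source side to the target side, so
   that consecutive factors of the zigzag compose. *)
Definition consistent (c : marking) := forall j (p : 'I_(a j)), j <= k.+1 ->
  var j p = i -> left_mark c j p != right_mark c j p -> left_mark c j p = ~~ alpha j p.

Definition source_ob := fob (F 0) (fun p => ob_at (var 0 p) (~~ alpha 0 p)).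

(* [arrival c m] = P_{m-1} o E_{m-1} o ... o P_0 o E_0 and
   [upto c m] = E_m o arrival c m; the full zigzag is [upto c k.+1]. *)
Fixpoint arrival (c : marking) m : cMor C :=
  if m is m'.+1 then ccomp (tstep c m') (ccomp (fstep c m') (arrival c m'))
  else cid source_ob.

Definition upto (c : marking) m := ccomp (fstep c m) (arrival c m).

Lemma var_sigma j (p : 'I_(a j)) : j <= k -> var j p = xi j (sigma j p).
Proof. by case: j p => [|j] p le_jk //=; rewrite cocone. Qed.

Lemma place_mor_ends c j p : consistent c -> j <= k.+1 ->
  (if alpha j p then cdom (place_mor c j p) else ccod (place_mor c j p))
    = ob_at (var j p) (left_mark c j p) /\
  (if alpha j p then ccod (place_mor c j p) else cdom (place_mor c j p))
    = ob_at (var j p) (right_mark c j p).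
Proof.
move=> cons_c le_j; rewrite /place_mor /ob_at.
case: eqP => [var_i|_]; last by case: (alpha j p); rewrite ?cdom_id ?ccod_id.
move: (cons_c j p le_j var_i).
case: (alpha j p); case: (left_mark c j p); case: (right_mark c j p) => //= cons_p;
  rewrite ?cdom_id ?ccod_id //; by have := cons_p isT.
Qed.

Lemma place_mor_sigma c j p : consistent c -> j <= k ->
  (if alpha j p then ccod (place_mor c j p) else cdom (place_mor c j p))
    = trans_ob c j (sigma j p).
Proof.
move=> cons_c le_jk; have [_ ->] := place_mor_ends _ _ p cons_c (leqW le_jk).
by rewrite var_sigma // /right_mark le_jk.
Qed.

Lemma place_mor_tau c j q : consistent c -> j <= k ->
  (if alpha j.+1 q then cdom (place_mor c j.+1 q) else ccod (place_mor c j.+1 q))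
    = trans_ob c j (tau j q).
Proof. by move=> cons_c le_jk; have [-> _] := place_mor_ends _ _ q cons_c le_jk. Qed.

Lemma fstep_dom c j : consistent c -> j <= k.+1 ->
  cdom (fstep c j) = fob (F j) (fun p => ob_at (var j p) (left_mark c j p)).
Proof.
move=> cons_c le_j; rewrite /fstep fmor_dom; congr (fob _ _).
by apply: functional_extensionality => p; have [-> _] := place_mor_ends _ _ p cons_c le_j.
Qed.

Lemma fstep_tstep c j : consistent c -> j <= k -> ccod (fstep c j) = cdom (tstep c j).
Proof.
move=> cons_c le_jk; rewrite /fstep /tstep fmor_cod tcomp_dom; congr (fob _ _).
by apply: functional_extensionality => p; rewrite place_mor_sigma.
Qed.

Lemma tstep_fstep c j : consistent c -> j <= k -> ccod (tstep c j) = cdom (fstep c j.+1).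
Proof. by move=> cons_c le_jk; rewrite /tstep tcomp_cod fstep_dom. Qed.

Lemma arrival_cod c m : consistent c -> m <= k.+1 -> ccod (arrival c m) = cdom (fstep c m).
Proof.
move=> cons_c; elim: m => [|m IH] le_m /=; first by rewrite ccod_id fstep_dom.
have le_mk : m <= k by [].
rewrite ccod_comp ?tstep_fstep // ccod_comp ?IH ?fstep_tstep //; exact: ltnW.
Qed.

Lemma arrival_congr c c' M :
  (forall m, m < M -> tstep c m = tstep c' m /\ fstep c m = fstep c' m) ->
  arrival c M = arrival c' M.
Proof.
elim: M => [|M IH] same //=.
have [-> ->] := same M (ltnSn M).
by rewrite IH // => m lt_mM; apply: same; exact: ltnW.
Qed.

(* Firing the unmarked transition x of phi_j in the i-th component, all of
   whose successors are marked: every place p with an arc x -> p has its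
   other adjacent transition (or the boundary) marked. *)
Section Firing.
Variables (c : marking) (j : nat) (x : 'I_(n j)).
Hypotheses (cons_c : consistent c) (le_jk : j <= k) (x_in : xi j x = i)
  (x_unfired : c j x = false).
Hypothesis succ_left : forall p, sigma j p = x -> ~~ alpha j p -> left_mark c j p.
Hypothesis succ_right : forall q, tau j q = x -> alpha j.+1 q -> right_mark c j.+1 q.
Hypothesis dinat_x : dinatural_in (F j) (F j.+1) (sigma j) (tau j) (tcomp (phi j)) x.

Definition fire (b : bool) : marking :=
  fun j' y => if (j' == j) && (val y == val x) then b else c j' y.

Lemma fire_false : fire false = c.
Proof.
apply: functional_extensionality_dep => j'; apply: functional_extensionality => y.
rewrite /fire; case: eqP => //= eq_j; case: eqP => // eq_y; subst j'.
by rewrite (val_inj eq_y).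
Qed.

Lemma fire_other_block b j' : j' != j -> fire b j' = c j'.
Proof.
by move=> ne_j; apply: functional_extensionality => y; rewrite /fire (negbTE ne_j).
Qed.

Lemma fire_at b : fire b j x = b.
Proof. by rewrite /fire !eqxx. Qed.

Lemma fire_other b y : y != x -> fire b j y = c j y.
Proof. by move=> ne_y; rewrite /fire eqxx /= val_eqE (negbTE ne_y). Qed.

Lemma left_fire b j' : j' != j.+1 -> left_mark (fire b) j' = left_mark c j'.
Proof.
by case: j' => [|j'] ne_j //=; apply: functional_extensionality => p; rewrite fire_other_block.
Qed.

Lemma right_fire b j' : j' != j -> right_mark (fire b) j' = right_mark c j'.
Proof.
by move=> ne_j; apply: functional_extensionality => p; rewrite /right_mark fire_other_block.
Qed.

Lemma left_at_x p : sigma j p = x -> left_mark c j p = ~~ alpha j p.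
Proof.
move=> sp_x; case al_p: (alpha j p); last exact: succ_left (negbT al_p).
have right_p : right_mark c j p = false by rewrite /right_mark le_jk sp_x.
have var_p : var j p = i by rewrite var_sigma // sp_x.
move: (cons_c j p (leqW le_jk) var_p); rewrite right_p al_p.
by case: (left_mark c j p) => // /(_ isT).
Qed.

Lemma right_at_x q : tau j q = x -> right_mark c j.+1 q = alpha j.+1 q.
Proof.
move=> tq_x; case al_q: (alpha j.+1 q); first exact: succ_right.
have var_q : var j.+1 q = i by rewrite /= tq_x.
move: (cons_c j.+1 q le_jk var_q) => /=; rewrite tq_x x_unfired al_q.
by case: (right_mark c j.+1 q) => // /(_ isT).
Qed.

Lemma place_mor_fire_in b p : sigma j p != x -> place_mor (fire b) j p = place_mor c j p.
Proof.
move=> ne_p; rewrite /place_mor left_fire ?(ltn_eqF (ltnSn j)) //.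
by rewrite /right_mark le_jk fire_other.
Qed.

Lemma place_mor_fire_out b q : tau j q != x -> place_mor (fire b) j.+1 q = place_mor c j.+1 q.
Proof.
by move=> ne_q; rewrite /place_mor right_fire ?(gtn_eqF (ltnSn j)) //= fire_other.
Qed.

Lemma place_mor_fire_other b m : m != j -> m != j.+1 ->
  place_mor (fire b) m = place_mor c m.
Proof.
move=> ne_j ne_j1; apply: functional_extensionality => p.
by rewrite /place_mor left_fire // right_fire.
Qed.

Lemma fire_consistent b : consistent (fire b).
Proof.
move=> m p le_m var_p.
have [eq_m|ne_j] := eqVneq m j.
  subst m; rewrite left_fire ?(ltn_eqF (ltnSn j)) // /right_mark le_jk.
  have [sp_x|ne_p] := eqVneq (sigma j p) x; first by rewrite left_at_x.
  by move: (cons_c j p le_m var_p); rewrite fire_other // /right_mark le_jk.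
have [eq_m|ne_j1] := eqVneq m j.+1.
  subst m; rewrite right_fire ?(gtn_eqF (ltnSn j)) //=.
  have [tq_x|ne_q] := eqVneq (tau j p) x.
    by rewrite tq_x fire_at right_at_x //; case: b; case: (alpha j.+1 p).
  by rewrite fire_other //; exact: (cons_c j.+1 p).
by rewrite left_fire // right_fire //; exact: cons_c.
Qed.

(* Around x, E_j splits as (F_j of the hexagon leg at x) o (F_j of the rest),
   and dually for E_{j+1}; P_j is phi_j at the objects [fire_ob b]. *)
Definition in_leg b p :=
  if sigma j p == x then hex_in f b (alpha j p) else cid (trans_ob c j (sigma j p)).
Definition in_rest p :=
  if sigma j p == x then cid (end_ob (~~ alpha j p)) else place_mor c j p.
Definition out_leg b q :=
  if tau j q == x then hex_out f b (alpha j.+1 q) else cid (trans_ob c j (tau j q)).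
Definition out_rest q :=
  if tau j q == x then cid (end_ob (alpha j.+1 q)) else place_mor c j.+1 q.
Definition fire_ob b y := if y == x then end_ob b else trans_ob c j y.

Lemma hexagon :
  ccomp (fmor (F j.+1) (out_leg false))
    (ccomp (tcomp (phi j) (fire_ob false)) (fmor (F j) (in_leg false))) =
  ccomp (fmor (F j.+1) (out_leg true))
    (ccomp (tcomp (phi j) (fire_ob true)) (fmor (F j) (in_leg true))).
Proof. exact: dinat_x (trans_ob c j) f. Qed.

Lemma in_compat b p :
  if alpha j p then ccod (in_rest p) = cdom (in_leg b p)
  else ccod (in_leg b p) = cdom (in_rest p).
Proof.
rewrite /in_rest /in_leg; case: eqP => _.
  by case: b; case: (alpha j p); rewrite /= ?cdom_id ?ccod_id.
by have := place_mor_sigma _ _ p cons_c le_jk; case: (alpha j p) => ->; rewrite ?cdom_id ?ccod_id.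
Qed.

Lemma out_compat b q :
  if alpha j.+1 q then ccod (out_leg b q) = cdom (out_rest q)
  else ccod (out_rest q) = cdom (out_leg b q).
Proof.
rewrite /out_rest /out_leg; case: eqP => _.
  by case: b; case: (alpha j.+1 q); rewrite /= ?cdom_id ?ccod_id.
by have := place_mor_tau _ _ q cons_c le_jk; case: (alpha j.+1 q) => ->; rewrite ?cdom_id ?ccod_id.
Qed.

Lemma fstep_fire_in b :
  fstep (fire b) j = ccomp (fmor (F j) (in_leg b)) (fmor (F j) in_rest).
Proof.
rewrite /fstep -fmor_comp; last exact: in_compat.
congr (fmor _ _); apply: functional_extensionality => p.
rewrite /in_leg /in_rest; case: eqP => [sp_x|/eqP ne_p]; last first.
  rewrite place_mor_fire_in //; have := place_mor_sigma _ _ p cons_c le_jk.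
  by case: (alpha j p) => <-; rewrite ?ccomp_idl ?ccomp_idr.
rewrite /place_mor left_fire ?(ltn_eqF (ltnSn j)) // left_at_x // /right_mark le_jk.
rewrite sp_x fire_at var_sigma // sp_x x_in eqxx.
by case: b; case: (alpha j p); rewrite /= ?cid_idem ?ccomp_idl ?ccomp_idr.
Qed.

Lemma fstep_fire_out b :
  fstep (fire b) j.+1 = ccomp (fmor (F j.+1) out_rest) (fmor (F j.+1) (out_leg b)).
Proof.
rewrite /fstep -fmor_comp; last exact: out_compat.
congr (fmor _ _); apply: functional_extensionality => q.
rewrite /out_leg /out_rest; case: eqP => [tq_x|/eqP ne_q]; last first.
  rewrite place_mor_fire_out //; have := place_mor_tau _ _ q cons_c le_jk.
  by case: (alpha j.+1 q) => <-; rewrite ?ccomp_idl ?ccomp_idr.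
rewrite /place_mor right_fire ?(gtn_eqF (ltnSn j)) // right_at_x //= tq_x fire_at x_in eqxx.
by case: b; case: (alpha j.+1 q); rewrite /= ?cid_idem ?ccomp_idl ?ccomp_idr.
Qed.

Lemma tstep_fire b : tstep (fire b) j = tcomp (phi j) (fire_ob b).
Proof.
rewrite /tstep; congr (tcomp _ _); apply: functional_extensionality => y.
rewrite /fire_ob; case: eqP => [->|/eqP ne_y]; last by rewrite /trans_ob fire_other.
by rewrite /trans_ob fire_at x_in /ob_at eqxx.
Qed.

Lemma fire_regroup b h : ccod h = cdom (fstep c j) ->
  ccomp (fstep (fire b) j.+1) (ccomp (tstep (fire b) j) (ccomp (fstep (fire b) j) h)) =
  ccomp (fmor (F j.+1) out_rest)
    (ccomp (ccomp (fmor (F j.+1) (out_leg b))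
                  (ccomp (tcomp (phi j) (fire_ob b)) (fmor (F j) (in_leg b))))
           (ccomp (fmor (F j) in_rest) h)).
Proof.
move=> cod_h; rewrite fstep_fire_in fstep_fire_out tstep_fire; apply: comp_regroup.
- rewrite cod_h -fire_false fstep_fire_in cdom_comp //.
  exact: fmor_comp_ends (in_compat false).
- exact: fmor_comp_ends (in_compat b).
- rewrite fmor_cod tcomp_dom; congr (fob _ _); apply: functional_extensionality => p.
  rewrite /in_leg /fire_ob; case: eqP => _.
    by case: b; case: (alpha j p); rewrite /= ?ccod_id ?cdom_id.
  by case: (alpha j p); rewrite ?ccod_id ?cdom_id.
- rewrite fmor_dom tcomp_cod; congr (fob _ _); apply: functional_extensionality => q.
  rewrite /out_leg /fire_ob; case: eqP => _.
    by case: b; case: (alpha j.+1 q); rewrite /= ?ccod_id ?cdom_id.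
  by case: (alpha j.+1 q); rewrite ?ccod_id ?cdom_id.
- exact: fmor_comp_ends (out_compat b).
Qed.

Lemma fire_local h : ccod h = cdom (fstep c j) ->
  ccomp (fstep c j.+1) (ccomp (tstep c j) (ccomp (fstep c j) h)) =
  ccomp (fstep (fire true) j.+1) (ccomp (tstep (fire true) j) (ccomp (fstep (fire true) j) h)).
Proof. by move=> cod_h; rewrite -{1 2 3}fire_false !fire_regroup // hexagon. Qed.

Lemma upto_fire : upto c k.+1 = upto (fire true) k.+1.
Proof.
have below : arrival (fire true) j = arrival c j.
  apply: arrival_congr => m lt_mj.
  have ne_j : m != j by rewrite ltn_eqF.
  have ne_j1 : m != j.+1 by rewrite ltn_eqF // ltnW.
  by rewrite /tstep /fstep /trans_ob fire_other_block // place_mor_fire_other.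
suff above d : d <= k - j -> upto c (j + d).+1 = upto (fire true) (j + d).+1.
  by rewrite -(subnKC le_jk) above.
elim: d => [|d IH] le_d.
  rewrite addn0 /upto /= below fire_local //.
  by rewrite arrival_cod // ltnW.
have ne_j : (j + d).+1 != j by rewrite gtn_eqF // ltnS leq_addr.
have ne_j' : (j + d).+2 != j by rewrite gtn_eqF // ltnW // ltnS leq_addr.
have ne_j1 : (j + d).+2 != j.+1 by rewrite eqSS.
rewrite addnS /upto /= -/(upto c (j + d).+1) -/(upto (fire true) (j + d).+1).
rewrite (IH (ltnW le_d)) /fstep /tstep /trans_ob !fire_other_block //.
by rewrite place_mor_fire_other.
Qed.

End Firing.

Definition marked (b : bool) : marking := fun j _ => b.

Section Scheduling.
Hypothesis acyclic : component_acyclic k alpha sigma tau xi i.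
Hypothesis dinat : forall j, j <= k -> forall x : 'I_(n j), xi j x = i ->
  dinatural_in (F j) (F j.+1) (sigma j) (tau j) (tcomp (phi j)) x.

(* Transitions, and the relation "v is a successor of u": a directed path
   u -> place -> v of length two in the composite graph. *)
Definition tnode := {j : 'I_k.+1 & 'I_(n j)}.

Definition succb (ju : nat) (tu : 'I_(n ju)) (jv : nat) (tv : 'I_(n jv)) : bool :=
  ((ju == jv.+1) && [exists p : 'I_(a jv.+1),
      [&& val (sigma jv.+1 p) == val tu, ~~ alpha jv.+1 p & tau jv p == tv]])
  || ((jv == ju.+1) && [exists q : 'I_(a ju.+1),
      [&& tau ju q == tu, alpha ju.+1 q & val (sigma ju.+1 q) == val tv]]).

Definition succ_rel : rel tnode := fun u v => succb (tag u) (tagged u) (tag v) (tagged v).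

Definition node_of (u : tnode) : gnode a n := @Trans a n (tag u) (tagged u).

Local Notation arc := (garc k alpha sigma tau).

Lemma tnode_le (u : tnode) : tag u <= k.
Proof. exact: ltn_ord (tag u). Qed.

Lemma succb_path ju tu jv tv : ju <= k -> jv <= k -> succb ju tu jv tv ->
  clos_trans _ arc (@Trans a n ju tu) (@Trans a n jv tv).
Proof.
move=> le_u le_v; case/orP.
  case/andP=> /eqP eq_u /existsP [p /and3P [/eqP sp_u al_p /eqP tp_v]]; subst ju.
  rewrite -(val_inj sp_u) -tp_v.
  apply: t_trans (t_step _ _ _ _ (arc_sigma_out sigma tau le_u al_p)) _.
  by apply: t_step; apply: arc_tau_in => //; exact: ltnW.
case/andP=> /eqP eq_v /existsP [q /and3P [/eqP tq_u al_q /eqP sq_v]]; subst jv.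
rewrite -(val_inj sq_v) -tq_u.
apply: t_trans (t_step _ _ _ _ (arc_tau_out sigma tau le_u al_q)) _.
by apply: t_step; apply: arc_sigma_in.
Qed.

Lemma connect_path (u v : tnode) :
  connect succ_rel u v -> clos_refl_trans _ arc (node_of u) (node_of v).
Proof.
move/connectP=> [s path_s ->]; elim: s u path_s => [|w s IH] u /=.
  by move=> _; apply: rt_refl.
case/andP=> uw path_s; apply: rt_trans (IH _ path_s).
exact: clos_t_clos_rt (succb_path _ _ _ _ (tnode_le u) (tnode_le w) uw).
Qed.

Lemma no_succ_cycle (u w : tnode) :
  xi (tag u) (tagged u) = i -> succ_rel u w -> ~ connect succ_rel w u.
Proof.
move=> u_in uw wu; apply: (acyclic (node_of u)).
  by exists (tag u), (tagged u); split; [exact: tnode_le | by [] | exact: rt_refl].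
exact: clos_t_rt (succb_path _ _ _ _ (tnode_le u) (tnode_le w) uw) (connect_path _ _ wu).
Qed.

Definition pending (c : marking) (u : tnode) :=
  (xi (tag u) (tagged u) == i) && ~~ c (tag u) (tagged u).

(* If some transition is pending, one of them has no pending successor:
   take a pending u minimising the number of transitions reachable from it. *)
Lemma pending_sink c u0 : pending c u0 ->
  exists u, pending c u /\ forall v, pending c v -> ~~ succ_rel u v.
Proof.
move=> pend_u0.
pose reach (u : tnode) := [set v | [exists w, succ_rel u w && connect succ_rel w v]].
have [u pend_u min_u] := arg_minnP (fun u => #|reach u|) pend_u0.
exists u; split => // v pend_v; apply/negP => uv.
have sub_vu : reach v \subset reach u.
  apply/subsetP => z; rewrite !inE => /existsP [w /andP [vw wz]].
  by apply/existsP; exists v; rewrite uv (connect_trans (connect1 vw) wz).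
have v_u : v \in reach u by rewrite inE; apply/existsP; exists v; rewrite uv connect0.
have v_v : v \notin reach v.
  apply/negP; rewrite inE => /existsP [w /andP [vw wv]].
  by case/andP: pend_v => /eqP v_in _; exact: no_succ_cycle v_in vw wv.
have : reach v \proper reach u by apply/properP; split => //; exists v.
by move/proper_card; rewrite ltnNge min_u.
Qed.

(* A pending transition without pending successors may be fired. *)
Lemma sink_succ_left c j (x : 'I_(n j)) : j <= k -> xi j x = i ->
  (forall v, pending c v -> ~~ succb j x (tag v) (tagged v)) ->
  forall p, sigma j p = x -> ~~ alpha j p -> left_mark c j p.
Proof.
case: j x => [|j] x le_j x_in sink p sp_x al_p; first exact: al_p.
rewrite /=; case fired: (c j (tau j p)) => //; exfalso.
have lt_j : j < k.+1 by rewrite ltnS ltnW.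
apply: (negP (sink (existT _ (Ordinal lt_j) (tau j p)) _)).
  by rewrite /pending /= fired cocone // sp_x x_in eqxx.
rewrite /succb /=; apply/orP; left; rewrite eqxx /=.
by apply/existsP; exists p; rewrite sp_x eqxx al_p eqxx.
Qed.

Lemma sink_succ_right c j (x : 'I_(n j)) : j <= k -> xi j x = i ->
  (forall v, pending c v -> ~~ succb j x (tag v) (tagged v)) ->
  forall q, tau j q = x -> alpha j.+1 q -> right_mark c j.+1 q.
Proof.
move=> le_j x_in sink q tq_x al_q; rewrite /right_mark; case: ifP => // lt_jk.
case fired: (c j.+1 (sigma j.+1 q)) => //; exfalso.
apply: (negP (sink (existT _ (Ordinal (lt_jk : j.+1 < k.+1)) (sigma j.+1 q)) _)).
  by rewrite /pending /= fired -cocone // tq_x x_in eqxx.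
rewrite /succb /=; apply/orP; right; rewrite eqxx /=.
by apply/existsP; exists q; rewrite tq_x eqxx al_q eqxx.
Qed.

Lemma upto_settled c : (forall u, ~~ pending c u) ->
  upto c k.+1 = upto (marked true) k.+1.
Proof.
move=> settled.
have fired m t : m <= k -> xi m t = i -> c m t.
  move=> le_m t_in; have lt_m : m < k.+1 by [].
  by move: (settled (existT _ (Ordinal lt_m) t)); rewrite /pending /= t_in eqxx /= negbK.
have same_ob m : m <= k -> trans_ob c m = trans_ob (marked true) m.
  move=> le_m; apply: functional_extensionality => t; rewrite /trans_ob /ob_at.
  by case: eqP => // t_in; rewrite fired.
have same_place m : m <= k.+1 -> place_mor c m = place_mor (marked true) m.
  move=> le_m; apply: functional_extensionality => p; rewrite /place_mor.
  case: eqP => // var_p.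
  have -> : left_mark c m p = left_mark (marked true) m p.
    by case: m p le_m var_p => [|m] p le_m var_p //=; rewrite fired.
  have -> : right_mark c m p = right_mark (marked true) m p.
    by rewrite /right_mark; case: ifP => // le_mk; rewrite fired // -var_sigma.
  by [].
rewrite /upto /fstep same_place //; congr (ccomp _ _).
apply: arrival_congr => m lt_m.
by rewrite /tstep /fstep same_ob ?same_place // ltnW.
Qed.

Lemma upto_fire_all c : consistent c -> upto c k.+1 = upto (marked true) k.+1.
Proof.
have [N] := ubnPleq #|[set u | pending c u]|.
elim: N c => [|N IH] c size_c cons_c.
  apply: upto_settled => u; apply/negP => pend_u.
  move: size_c; rewrite leqn0 cards_eq0 => /eqP empty.
  by have := in_set0 u; rewrite -empty inE pend_u.
have [u0 pend_u0|none] := pickP (pending c); last first.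
  by apply: upto_settled => u; rewrite none.
have [u [pend_u sink_u]] := pending_sink _ _ pend_u0.
have /andP [/eqP u_in /negbTE unfired_u] := pend_u.
have le_u := tnode_le u.
have succ_l := sink_succ_left _ _ _ le_u u_in sink_u.
have succ_r := sink_succ_right _ _ _ le_u u_in sink_u.
rewrite (upto_fire _ _ _ cons_c le_u u_in unfired_u succ_l succ_r (dinat _ le_u _ u_in)).
apply: IH; last exact: fire_consistent.
rewrite -ltnS; apply: leq_trans size_c; apply: proper_card; apply/properP; split.
  apply/subsetP => v; rewrite !inE /pending /fire.
  by case/andP=> ->; case: ifP.
by exists u; rewrite !inE // /pending /fire !eqxx andbF.
Qed.

Lemma marked_consistent b : consistent (marked b).
Proof.
move=> [|m] p le_m _ //=; rewrite /right_mark.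
case: ifP => _; first by rewrite eqxx.
by case: b; case: (alpha m.+1 p).
Qed.

Definition first_leg b p :=
  if var 0 p == i then hex_in f b (alpha 0 p) else cid (A (var 0 p)).
Definition last_leg b q :=
  if var k.+1 q == i then hex_out f b (alpha k.+1 q) else cid (A (var k.+1 q)).

Lemma fstep_marked_first b : fstep (marked b) 0 = fmor (F 0) (first_leg b).
Proof.
rewrite /fstep; congr (fmor _ _); apply: functional_extensionality => p.
rewrite /place_mor /first_leg /right_mark leq0n /=; case: eqP => // _.
by case: b; case: (alpha 0 p).
Qed.

Lemma fstep_marked_last b : fstep (marked b) k.+1 = fmor (F k.+1) (last_leg b).
Proof.
rewrite /fstep; congr (fmor _ _); apply: functional_extensionality => q.
rewrite /place_mor /last_leg /right_mark ltnn /=; case: eqP => // _.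
by case: b; case: (alpha k.+1 q).
Qed.

Lemma fstep_marked_inner b m : m < k ->
  fstep (marked b) m.+1 = cid (cdom (fstep (marked b) m.+1)).
Proof.
move=> lt_mk; have cons_b := marked_consistent b.
rewrite fstep_dom //; last exact: ltnW lt_mk.
rewrite -fmor_id /fstep; congr (fmor _ _); apply: functional_extensionality => q.
by rewrite /place_mor /right_mark lt_mk /= eqxx /ob_at; case: eqP.
Qed.

Lemma tstep_marked_chain b m : m < k ->
  ccod (tstep (marked b) m) = cdom (tstep (marked b) m.+1).
Proof.
move=> lt_mk; have cons_b := marked_consistent b.
rewrite (tstep_fstep _ _ cons_b (ltnW lt_mk)) -(fstep_tstep _ _ cons_b lt_mk).
by rewrite (fstep_marked_inner b m lt_mk) cdom_id ccod_id.
Qed.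

Lemma arrivalS c m : arrival c m.+1 = ccomp (tstep c m) (ccomp (fstep c m) (arrival c m)).
Proof. by []. Qed.

Lemma arrival_marked b m : m <= k ->
  arrival (marked b) m.+1
  = ccomp (composite m (fun j => tcomp (phi j)) xi (ob_at^~ b)) (fstep (marked b) 0).
Proof.
have cons_b := marked_consistent b.
elim: m => [|m IH] le_mk.
  by rewrite arrivalS /= comp_id_dom // fstep_dom.
have [dom_m cod_m] := composite_ends _ _ _ _ (fun j => tcomp (phi j)) xi (ob_at^~ b) m
  (fun j lt_jm => tstep_marked_chain b j (leq_trans lt_jm (ltnW le_mk))).
rewrite arrivalS fstep_marked_inner // comp_id_cod; last by rewrite arrival_cod // ltnW.
rewrite (IH (ltnW le_mk)) composite_succ ccompA //.
  by rewrite dom_m -fstep_tstep.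
by rewrite cod_m tstep_marked_chain.
Qed.

Lemma upto_marked b :
  upto (marked b) k.+1 = ccomp (fmor (F k.+1) (last_leg b))
    (ccomp (composite k (fun j => tcomp (phi j)) xi (ob_at^~ b)) (fmor (F 0) (first_leg b))).
Proof. by rewrite /upto arrival_marked // fstep_marked_first fstep_marked_last. Qed.

Lemma hexagon_composite :
  ccomp (fmor (F k.+1) (last_leg false))
    (ccomp (composite k (fun j => tcomp (phi j)) xi (ob_at^~ false))
           (fmor (F 0) (first_leg false))) =
  ccomp (fmor (F k.+1) (last_leg true))
    (ccomp (composite k (fun j => tcomp (phi j)) xi (ob_at^~ true))
           (fmor (F 0) (first_leg true))).
Proof. by rewrite -!upto_marked; apply: upto_fire_all; exact: marked_consistent. Qed.

End Scheduling.
End Zigzag.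

Theorem mainTheorem5 (B C : category) (k : nat) (a n : nat -> nat)
    (alpha : forall j, 'I_(a j) -> bool)
    (F : forall j, mfunctor B C (alpha j))
    (sigma : forall j, 'I_(a j) -> 'I_(n j))
    (tau : forall j, 'I_(a j.+1) -> 'I_(n j))
    (phi : forall j, mtrans (F j) (F j.+1) (sigma j) (tau j))
    (l : nat) (xi : forall j, 'I_(n j) -> 'I_l) (i : 'I_l) :
  is_colimit k sigma tau xi ->
  component_acyclic k alpha sigma tau xi i ->
  (forall j, j <= k -> forall x : 'I_(n j), xi j x = i ->
     dinatural_in (F j) (F j.+1) (sigma j) (tau j) (tcomp (phi j)) x) ->
  dinatural_in (F 0) (F k.+1) (fun p => xi 0 (sigma 0 p)) (fun q => xi k (tau k q))
    (composite k (fun j => tcomp (phi j)) xi) i.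
Proof.
case=> cocone _ _ acyclic dinat A f.
exact: (hexagon_composite B C k a n alpha F sigma tau phi l xi i cocone A f acyclic dinat).
Qed.
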